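(* Let $(V,v)$ be the upper and lower probabilities on $(\Omega,\mathcal{F})$ generated by a nonempty set $\mathcal{P}\subseteq\Delta(\Omega,\mathcal{F})$. The following are equivalent: (i) $V$ is continuous at $\emptyset$; (ii) $V$ is continuous; (iii) $v$ is continuous; (iv) $v$ is continuous at $\Omega$. Moreover, each of (i)–(iv) implies (v): $\mathrm{core}(v)\subseteq\Delta^{\sigma}(\Omega,\mathcal{F})$.
   Context: $\Delta(\Omega,\mathcal{F})$ is the set of finitely additive probabilities on $\mathcal{F}$ and $\Delta^{\sigma}(\Omega,\mathcal{F})$ the set of countably additive probabilities. $V(A)=\sup_{P\in\mathcal{P}}P(A)$, $v(A)=\inf_{P\in\mathcal{P}}P(A)$. A set function $\mu$ is continuous if $\mu(A_n)\to\mu(A)$ whenever $A_n\uparrow A$ or $A_n\downarrow A$; continuous at $\emptyset$ if $\mu(A_n)\to0$ whenever $A_n\downarrow\emptyset$; continuous at $\Omega$ if $\mu(A_n)\to1$ whenever $A_n\uparrow\Omega$. $\mathrm{core}(v)=\{P\in\Delta(\Omega,\mathcal{F}): P\ge v \text{ on } \mathcal{F}\}$. *)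

From HB Require Import structures.
From mathcomp Require Import all_boot all_order all_algebra.
From mathcomp Require Import all_classical all_reals all_analysis.
Set Implicit Arguments. Unset Strict Implicit. Unset Printing Implicit Defensive.
Import Order.TTheory GRing.Theory Num.Theory numFieldNormedType.Exports.
Local Open Scope classical_set_scope.
Local Open Scope ring_scope.

Section Defs.
Context {d : measure_display} {T : measurableType d} {R : realType}.

(* Set functions are total functions on sets; only their values on the
   sigma-algebra F = measurable are relevant. *)

Definition fa_prob (mu : set T -> R) : Prop :=
  [/\ mu setT = 1,
      (forall A, measurable A -> 0 <= mu A) &
      (forall A B, measurable A -> measurable B -> A `&` B = set0 ->
         mu (A `|` B) = mu A + mu B)].

Definition ca_prob (mu : set T -> R) : Prop :=
  fa_prob mu /\
  forall A : nat -> set T, (forall n, measurable (A n)) -> trivIset setT A ->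
    (fun n => \sum_(0 <= i < n) mu (A i)) @ \oo --> mu (\bigcup_n A n).

Definition upper (PP : set (set T -> R)) (A : set T) : R :=
  sup [set mu A | mu in PP].
Definition lower (PP : set (set T -> R)) (A : set T) : R :=
  inf [set mu A | mu in PP].

Definition cont_from_below (mu : set T -> R) : Prop :=
  forall A : nat -> set T, (forall n, measurable (A n)) ->
    (forall n, A n `<=` A n.+1) ->
    (fun n => mu (A n)) @ \oo --> mu (\bigcup_n A n).

Definition cont_from_above (mu : set T -> R) : Prop :=
  forall A : nat -> set T, (forall n, measurable (A n)) ->
    (forall n, A n.+1 `<=` A n) ->
    (fun n => mu (A n)) @ \oo --> mu (\bigcap_n A n).

Definition continuous_sf (mu : set T -> R) : Prop :=
  cont_from_below mu /\ cont_from_above mu.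

Definition cont_at_empty (mu : set T -> R) : Prop :=
  forall A : nat -> set T, (forall n, measurable (A n)) ->
    (forall n, A n.+1 `<=` A n) -> \bigcap_n A n = set0 ->
    (fun n => mu (A n)) @ \oo --> (0 : R).

Definition cont_at_whole (mu : set T -> R) : Prop :=
  forall A : nat -> set T, (forall n, measurable (A n)) ->
    (forall n, A n `<=` A n.+1) -> \bigcup_n A n = setT ->
    (fun n => mu (A n)) @ \oo --> (1 : R).

Definition core (v : set T -> R) : set (set T -> R) :=
  [set mu | fa_prob mu /\ forall A, measurable A -> v A <= mu A].

End Defs.

(* Taking suprema in mu A = mu B + mu (A `\` B) shows that V is monotone and satisfies
   V A <= V B + V (A `\` B) for B included in A; with continuity at the empty set, this squeezes
   V (A n) towards its limit from both sides.  Complementation v A = 1 - V (~` A) exchanges V and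
   v, continuity from above and from below, and continuity at the empty set and at the whole
   space.  A member of core(v) lies between 0 and V, so it is continuous at the empty set, which
   for a finitely additive probability is countable additivity. *)
From mathcomp Require Import all_boot all_order all_algebra.
From mathcomp Require Import all_classical all_reals all_analysis.
From mathcomp Require Import lra.
Set Implicit Arguments. Unset Strict Implicit. Unset Printing Implicit Defensive.
Import Order.TTheory GRing.Theory Num.Theory numFieldNormedType.Exports.
Local Open Scope classical_set_scope.
Local Open Scope ring_scope.

Section FiniteAdditivity.
Context {d : measure_display} {T : measurableType d} {R : realType}.
Variable mu : set T -> R.
Hypothesis mu_fa : fa_prob mu.

Lemma fa_prob_ge0 A : measurable A -> 0 <= mu A.
Proof. by case: mu_fa => _ + _; apply. Qed.

Lemma fa_prob_set0 : mu set0 = 0.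
Proof.
case: mu_fa => _ _ muU.
have := muU set0 set0 measurable0 measurable0 (setI0 _).
by rewrite setU0 => h; lra.
Qed.

Lemma fa_prob_setD A B : measurable A -> measurable B -> B `<=` A ->
  mu A = mu B + mu (A `\` B).
Proof.
move=> mA mB BA; case: mu_fa => _ _ muU.
rewrite -muU ?setDUK //; first exact: measurableD.
by rewrite setDIK.
Qed.

Lemma fa_prob_setC A : measurable A -> mu (~` A) = 1 - mu A.
Proof.
move=> mA; have := fa_prob_setD measurableT mA (@subsetT _ A).
by case: mu_fa => -> _ _; rewrite setTD => h; lra.
Qed.

Lemma le_fa_prob A B : measurable A -> measurable B -> B `<=` A -> mu B <= mu A.
Proof.
move=> mA mB BA; rewrite (fa_prob_setD mA mB BA) lerDl.
exact/fa_prob_ge0/measurableD.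
Qed.

Lemma fa_prob_le1 A : measurable A -> mu A <= 1.
Proof. by move=> mA; case: (mu_fa) => <- _ _; exact: le_fa_prob. Qed.

End FiniteAdditivity.

Section TailUnion.
Context {T : Type}.
Variable A : nat -> set T.

Definition tail_union n := \bigcup_(k in [set k | (n <= k)%N]) A k.

Lemma tail_union0 : tail_union 0 = \bigcup_n A n.
Proof. by apply/seteqP; split=> x [k _ Akx]; exists k. Qed.

Lemma tail_unionS n : tail_union n = A n `|` tail_union n.+1.
Proof.
apply/seteqP; split=> x.
- move=> [k /= nk Akx]; move: nk Akx; rewrite leq_eqVlt => /orP[/eqP <-|nk Akx].
    by left.
  by right; exists k.
- case=> [Anx|[k /= nk Akx]]; first by exists n => /=.
  by exists k => //=; exact: ltnW.
Qed.

Lemma tail_union_nonincreasing n : tail_union n.+1 `<=` tail_union n.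
Proof. by rewrite [X in _ `<=` X]tail_unionS => x; right. Qed.

Hypothesis A_disj : trivIset setT A.

Lemma setI_tail_unionS n : A n `&` tail_union n.+1 = set0.
Proof.
rewrite -subset0 => x [Anx [k /= nk Akx]].
have nk' : n = k by apply: A_disj => //; exists x.
by rewrite nk' ltnn in nk.
Qed.

Lemma bigcap_tail_union : \bigcap_n tail_union n = set0.
Proof.
rewrite -subset0 => x tx; have [k _ Akx] := tx 0%N I.
by have := setI_tail_unionS k; rewrite -subset0; apply; split; last exact: tx.
Qed.

End TailUnion.

Section ContinuityAtEmpty.
Context {d : measure_display} {T : measurableType d} {R : realType}.

Lemma cont_at_empty_le (f g : set T -> R) :
  (forall A, measurable A -> 0 <= g A <= f A) ->
  cont_at_empty f -> cont_at_empty g.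
Proof.
move=> gf f0 A mA decA capA.
apply: (@squeeze_cvgr _ _ _ _ (fun=> 0) (fun n => f (A n))).
- by apply: nearW => n; exact: gf.
- exact: cvg_cst.
- exact: f0.
Qed.

(* The partial sums are mu of the union minus mu of the tails, and the tails decrease to the
   empty set. *)
Lemma cont_at_empty_ca_prob (mu : set T -> R) :
  fa_prob mu -> cont_at_empty mu -> ca_prob mu.
Proof.
move=> mu_fa mu0; split=> // A mA A_disj.
have mtail n : measurable (tail_union A n).
  by apply: bigcup_measurable => k _; exact: mA.
have sumE n : mu (\bigcup_n A n) = \sum_(0 <= i < n) mu (A i) + mu (tail_union A n).
  elim: n => [|n IH]; first by rewrite big_geq // add0r tail_union0.
  case: (mu_fa) => _ _ muU.
  by rewrite IH big_nat_recr //= tail_unionS muU ?addrA ?setI_tail_unionS.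
have -> : (fun n => \sum_(0 <= i < n) mu (A i)) =
          (fun n => mu (\bigcup_n A n) - mu (tail_union A n)).
  by apply: funext => n; rewrite (sumE n) addrK.
rewrite -[X in _ --> X]subr0; apply: (cvgB (cvg_cst _)); apply: mu0 => //.
- exact: tail_union_nonincreasing.
- exact: bigcap_tail_union.
Qed.

Lemma continuous_sf_cont_at_empty (f : set T -> R) :
  f set0 = 0 -> continuous_sf f -> cont_at_empty f.
Proof. by move=> f0 [_ fA] A mA decA capA; rewrite -f0 -capA; exact: fA. Qed.

Lemma continuous_sf_cont_at_whole (f : set T -> R) :
  f setT = 1 -> continuous_sf f -> cont_at_whole f.
Proof. by move=> f1 [fB _] A mA incA cupA; rewrite -f1 -cupA; exact: fB. Qed.

Variable f : set T -> R.
Hypothesis le_f : forall A B, measurable A -> measurable B -> B `<=` A -> f B <= f A.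
Hypothesis f_setD : forall A B, measurable A -> measurable B -> B `<=` A ->
  f A <= f B + f (A `\` B).
Hypothesis f0 : cont_at_empty f.

(* [f (\bigcup A) - f (\bigcup A `\` A n) <= f (A n) <= f (\bigcup A)] *)
Lemma cont_at_empty_from_below : cont_from_below f.
Proof.
move=> A mA incA; set B := \bigcup_n A n.
have mB : measurable B by exact: bigcupT_measurable.
have AB n : A n `<=` B by move=> x Ax; exists n.
apply: (@squeeze_cvgr _ _ _ _ (fun n => f B - f (B `\` A n)) (fun=> f B)).
- apply: nearW => n; rewrite le_f ?andbT //.
  by have := f_setD mB (mA n) (AB n); lra.
- rewrite -[X in _ --> X]subr0; apply: (cvgB (cvg_cst _)); apply: f0.
  + by move=> n; exact: measurableD.
  + by move=> n x [Bx nAx]; split=> // Ax; exact/nAx/incA.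
  + rewrite -subset0 => x Bx; have [[k _ Akx] _] := Bx 0%N I.
    by have [_ /(_ Akx)] := Bx k I.
- exact: cvg_cst.
Qed.

(* [f (\bigcap A) <= f (A n) <= f (\bigcap A) + f (A n `\` \bigcap A)] *)
Lemma cont_at_empty_from_above : cont_from_above f.
Proof.
move=> A mA decA; set B := \bigcap_n A n.
have mB : measurable B by exact: bigcapT_measurable.
have BA n : B `<=` A n by move=> x /(_ n I).
apply: (@squeeze_cvgr _ _ _ _ (fun=> f B) (fun n => f B + f (A n `\` B))).
- by apply: nearW => n; rewrite le_f ?f_setD.
- exact: cvg_cst.
- rewrite -[X in _ --> X]addr0; apply: (cvgD (cvg_cst _)); apply: f0.
  + by move=> n; exact: measurableD.
  + by move=> n x [Ax nBx]; split=> //; exact: decA.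
  + rewrite -subset0 => x Ax; have [_ nBx] := Ax 0%N I.
    by apply: nBx => n _; have [] := Ax n I.
Qed.

Lemma cont_at_empty_continuous_sf : continuous_sf f.
Proof. by split; [exact: cont_at_empty_from_below | exact: cont_at_empty_from_above]. Qed.

End ContinuityAtEmpty.

Section Conjugate.
Context {d : measure_display} {T : measurableType d} {R : realType}.
Variables f g : set T -> R.
Hypothesis fg : forall A, measurable A -> f A = 1 - g (~` A).

Let f_seqE (A : nat -> set T) : (forall n, measurable (A n)) ->
  (fun n => f (A n)) = (fun n => 1 - g (~` A n)).
Proof. by move=> mA; apply: funext => n; exact: fg. Qed.

Lemma cont_from_below_conj : cont_from_above g -> cont_from_below f.
Proof.
move=> g_above A mA incA; rewrite f_seqE // fg ?setC_bigcup; last exact: bigcupT_measurable.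
apply: (cvgB (cvg_cst _)); apply: g_above => n; [exact: measurableC | exact: subsetC].
Qed.

Lemma cont_from_above_conj : cont_from_below g -> cont_from_above f.
Proof.
move=> g_below A mA decA; rewrite f_seqE // fg ?setC_bigcap; last exact: bigcapT_measurable.
apply: (cvgB (cvg_cst _)); apply: g_below => n; [exact: measurableC | exact: subsetC].
Qed.

Lemma continuous_sf_conj : continuous_sf g -> continuous_sf f.
Proof.
by case=> gB gA; split; [exact: cont_from_below_conj gA | exact: cont_from_above_conj gB].
Qed.

Lemma cont_at_empty_conj : cont_at_whole g -> cont_at_empty f.
Proof.
move=> g1 A mA decA capA; rewrite f_seqE // -(subrr 1).
apply: (cvgB (cvg_cst _)); apply: g1.
- by move=> n; exact: measurableC.
- by move=> n; exact: subsetC.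
- by rewrite -setC_bigcap capA setC0.
Qed.

End Conjugate.

Section UpperLower.
Context {d : measure_display} {T : measurableType d} {R : realType}.
Variable PP : set (set T -> R).
Hypothesis PP_neq0 : PP !=set0.
Hypothesis PP_fa : forall mu, PP mu -> fa_prob mu.

Local Notation V := (upper PP).
Local Notation v := (lower PP).

Lemma upper_ge mu A : measurable A -> PP mu -> mu A <= V A.
Proof.
move=> mA PPmu; apply: sup_upper_bound; last by exists mu.
split; first by exists (mu A), mu.
by exists 1 => _ [nu PPnu <-]; exact: (fa_prob_le1 (PP_fa PPnu) mA).
Qed.

Lemma upper_le A x : (forall mu, PP mu -> mu A <= x) -> V A <= x.
Proof.
move=> Ax; apply: ge_sup; first by case: PP_neq0 => mu PPmu; exists (mu A), mu.
by move=> _ [nu PPnu <-]; exact: Ax.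
Qed.

Lemma lower_le mu A : measurable A -> PP mu -> v A <= mu A.
Proof.
move=> mA PPmu; apply: ge_inf; last by exists mu.
by exists 0 => _ [nu PPnu <-]; exact: (fa_prob_ge0 (PP_fa PPnu) mA).
Qed.

Lemma lower_ge A x : (forall mu, PP mu -> x <= mu A) -> x <= v A.
Proof.
move=> Ax; apply: lb_le_inf; first by case: PP_neq0 => mu PPmu; exists (mu A), mu.
by move=> _ [nu PPnu <-]; exact: Ax.
Qed.

Lemma upper_set0 : V set0 = 0.
Proof.
apply/le_anti/andP; split; first by apply: upper_le => mu /PP_fa/fa_prob_set0 ->.
by case: PP_neq0 => mu PPmu; rewrite -(fa_prob_set0 (PP_fa PPmu)); exact: upper_ge.
Qed.

Lemma le_upper A B : measurable A -> measurable B -> B `<=` A -> V B <= V A.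
Proof.
move=> mA mB BA; apply: upper_le => mu PPmu.
exact: le_trans (le_fa_prob (PP_fa PPmu) mA mB BA) (upper_ge mA PPmu).
Qed.

Lemma upper_setD A B : measurable A -> measurable B -> B `<=` A ->
  V A <= V B + V (A `\` B).
Proof.
move=> mA mB BA; apply: upper_le => mu PPmu.
rewrite (fa_prob_setD (PP_fa PPmu) mA mB BA).
by apply: lerD; apply: upper_ge => //; exact: measurableD.
Qed.

Lemma lower_upperC A : measurable A -> v A = 1 - V (~` A).
Proof.
move=> mA; apply/le_anti/andP; split.
  suff : V (~` A) <= 1 - v A by lra.
  apply: upper_le => mu PPmu; rewrite (fa_prob_setC (PP_fa PPmu) mA).
  by have := lower_le mA PPmu; lra.
apply: lower_ge => mu PPmu.
by have := upper_ge (measurableC mA) PPmu; rewrite (fa_prob_setC (PP_fa PPmu) mA); lra.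
Qed.

Lemma upper_lowerC A : measurable A -> V A = 1 - v (~` A).
Proof. by move=> mA; rewrite lower_upperC ?setCK; [lra | exact: measurableC]. Qed.

Lemma lower_setT : v setT = 1.
Proof. by rewrite lower_upperC // setCT upper_set0 subr0. Qed.

Lemma core_lower_le_upper mu A : core v mu -> measurable A -> mu A <= V A.
Proof.
move=> [mu_fa v_le] mA; rewrite upper_lowerC //.
by have := v_le _ (measurableC mA); rewrite (fa_prob_setC mu_fa mA); lra.
Qed.

End UpperLower.

Theorem proposition2 (d : measure_display) (T : measurableType d) (R : realType)
  (PP : set (set T -> R)) :
  PP !=set0 -> (forall mu, PP mu -> fa_prob mu) ->
  [/\ (cont_at_empty (upper PP) <-> continuous_sf (upper PP)),
      (continuous_sf (upper PP) <-> continuous_sf (lower PP)),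
      (continuous_sf (lower PP) <-> cont_at_whole (lower PP)) &
      (cont_at_empty (upper PP) -> core (lower PP) `<=` [set mu | ca_prob mu])].
Proof.
move=> PP_neq0 PP_fa.
have vV := lower_upperC PP_neq0 PP_fa; have Vv := upper_lowerC PP_neq0 PP_fa.
have V_cont : cont_at_empty (upper PP) -> continuous_sf (upper PP).
  exact: cont_at_empty_continuous_sf (le_upper PP_neq0 PP_fa) (upper_setD PP_neq0 PP_fa).
have Vv_cont : continuous_sf (upper PP) <-> continuous_sf (lower PP).
  by split; [exact: continuous_sf_conj vV | exact: continuous_sf_conj Vv].
split.
- split; first exact: V_cont.
  exact: continuous_sf_cont_at_empty (upper_set0 PP_neq0 PP_fa).
- exact: Vv_cont.
- split; first exact: continuous_sf_cont_at_whole (lower_setT PP_neq0 PP_fa).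
  by move/(cont_at_empty_conj Vv)/V_cont/Vv_cont.
- move=> V0 mu core_mu; apply: cont_at_empty_ca_prob (proj1 core_mu) _.
  apply: cont_at_empty_le V0 => A mA.
  by rewrite (fa_prob_ge0 (proj1 core_mu)) ?(core_lower_le_upper PP_neq0 PP_fa).
Qed.
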